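(* Let $p,q,r$ be pairwise distinct primes with $p<q$ and $p<r$. Let $q',r'\in\{1,\dots,p-1\}$ be the inverses of $q,r$ modulo $p$, let $p'_q\in\{1,\dots,q-1\}$ be the inverse of $p$ modulo $q$ and $p'_r\in\{1,\dots,r-1\}$ the inverse of $p$ modulo $r$. Then for every integer $k$, $$F_k-F_{k-q}=\begin{cases}-1,& \text{if } a_k<r' \text{ and } c_k<p'_r,\\ 1,& \text{if } a_k\ge r' \text{ and } c_k\ge p'_r,\\ 0,&\text{otherwise},\end{cases}$$ and $$F_k-F_{k-r}=\begin{cases}-1,& \text{if } a_k<q' \text{ and } b_k<p'_q,\\ 1,& \text{if } a_k\ge q' \text{ and } b_k\ge p'_q,\\ 0,&\text{otherwise}.\end{cases}$$
   Context: For each integer $k$, let $a_k,b_k,c_k$ be the unique integers with $0\le a_k<p$, $0\le b_k<q$, $0\le c_k<r$ and $k\equiv a_kqr+b_krp+c_kpq \pmod{pqr}$, and define $F_k=\frac{a_k}{p}+\frac{b_k}{q}+\frac{c_k}{r}-\frac{k}{pqr}$. *)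

From mathcomp Require Import all_boot all_order all_algebra.
Set Implicit Arguments. Unset Strict Implicit. Unset Printing Implicit Defensive.
Import Order.TTheory GRing.Theory Num.Theory.
Local Open Scope ring_scope.

Definition abc_spec (p q r : nat) (k a b c : int) : Prop :=
  [/\ 0 <= a < p%:Z, 0 <= b < q%:Z, 0 <= c < r%:Z &
      (k == a * q%:Z * r%:Z + b * r%:Z * p%:Z + c * p%:Z * q%:Z
         %[mod (p * q * r)%N%:Z])%Z].

Definition Fval (p q r : nat) (a b c : int -> int) (k : int) : rat :=
  (a k)%:~R / p%:R + (b k)%:~R / q%:R + (c k)%:~R / r%:R
  - k%:~R / (p * q * r)%N%:R.

Definition is_inv_mod (x m y : nat) : Prop :=
  [/\ (0 < y)%N, (y < m)%N & (x * y = 1 %[mod m])%N].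

From mathcomp Require Import all_boot all_order all_algebra.
From mathcomp Require Import ring zify.
Import Order.TTheory GRing.Theory Num.Theory.
Local Open Scope ring_scope.

(* Subtracting q from k leaves the residue of k modulo q
   unchanged and lowers it by q modulo p and modulo r.  Since
   q == r' * (q r) (mod p) and q == p'_r * (p q) (mod r), the digits of k - q
   are  a_{k-q} = a_k - r' (mod p),  b_{k-q} = b_k,  c_{k-q} = c_k - p'_r
   (mod r), so  a_k - a_{k-q} = r' - p [a_k < r']  and
   c_k - c_{k-q} = p'_r - r [c_k < p'_r].  Hence
     F_k - F_{k-q} = r'/p + p'_r/r - 1/(p r) - [a_k < r'] - [c_k < p'_r],
   and the identity  r' r + p'_r p = p r + 1  turns the first three terms
   into 1, which gives the announced three cases. *)

Lemma eqz_mod_small (m x y : int) :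
  0 <= x < m -> 0 <= y < m -> (x == y %[mod m])%Z -> x = y.
Proof. by move=> hx hy /eqP; rewrite !modz_small. Qed.

Lemma digit_step {m x y d : int} : 0 <= x < m -> 0 <= y < m -> 0 <= d < m ->
  (y == x - d %[mod m])%Z -> x - y = if x < d then d - m else d.
Proof.
move=> hx hy hd hyx.
have -> : y = x - d + (if x < d then m else 0).
  apply: (@eqz_mod_small m) => //; first by case: ifP => hxd; lia.
  move: hyx; rewrite !eqz_mod_dvd => hyx.
  have -> : y - (x - d + (if x < d then m else 0))
          = y - (x - d) - (if x < d then m else 0) by ring.
  by rewrite rpredB //; case: ifP => _; rewrite ?dvdzz ?dvdz0.
by case: ifP => _; ring.
Qed.

Lemma digit_shift (m X k s x y d : int) : coprimez m X ->
  (k == x * X %[mod m])%Z -> (k - s == y * X %[mod m])%Z ->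
  (s == d * X %[mod m])%Z -> (y == x - d %[mod m])%Z.
Proof.
rewrite !eqz_mod_dvd => cX hk hks hs.
rewrite -(Gauss_dvdzl _ cX).
have -> : (y - (x - d)) * X = (k - x * X) - (k - s - y * X) - (s - d * X) by ring.
by apply: rpredB => //; apply: rpredB.
Qed.

Lemma inv_mod_dvd (x m y : nat) : is_inv_mod x m y -> (m%:Z %| x%:Z * y%:Z - 1)%Z.
Proof.
case=> _ _ hxy; rewrite -eqz_mod_dvd -PoszM.
by rewrite !modz_nat hxy.
Qed.

(* For coprime p and r, the normalised inverses r' of r mod p and s of p
   mod r satisfy  r' r + s p = p r + 1:  the left side is 1 mod p r (by the
   Chinese remainder theorem) and lies strictly between 1 and 2 p r. *)
Lemma inv_mod_sum {p r r' s : nat} : coprime p r ->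
  is_inv_mod r p r' -> is_inv_mod p r s -> (r' * r + s * p = p * r + 1)%N.
Proof.
move=> cpr [r'0 r'p hr'] [s0 sr hs].
have p0 : (0 < p)%N by apply: leq_ltn_trans r'p.
have r0 : (0 < r)%N by apply: leq_ltn_trans sr.
set N := (r' * r + s * p)%N.
have N1 : (N == 1 %[mod p * r])%N.
  rewrite chinese_remainder //; apply/andP; split; apply/eqP.
    by rewrite /N addnC modnMDl mulnC.
  by rewrite /N modnMDl mulnC.
have pr1 : (1 < p * r)%N by rewrite (@leq_trans r) ?leq_pmull // (leq_ltn_trans s0 sr).
have Ngt1 : (1 < N)%N by rewrite /N (@leq_add 1 1) // muln_gt0 ?r'0 ?s0.
have Nlt : (N < 2 * (p * r))%N.
  have ltr : (r' * r < p * r)%N by rewrite ltn_pmul2r.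
  have ltp : (s * p < p * r)%N by rewrite mulnC ltn_pmul2l.
  by rewrite /N; lia.
have hq : (N %/ (p * r) < 2)%N by rewrite ltn_divLR // ?muln_gt0 ?p0.
rewrite (divn_eq N (p * r)) (eqP N1) modn_small // in Ngt1 *.
by move: hq Ngt1; case: (N %/ (p * r))%N => [|[|q]] //; rewrite ?mul0n ?mul1n.
Qed.

Lemma abc_spec_rot (p q r : nat) (k a b c : int) :
  abc_spec p q r k a b c -> abc_spec q r p k b c a.
Proof.
case=> ha hb hc hk; split=> //; rewrite mulnC mulnA.
have -> : b * r%:Z * p%:Z + c * p%:Z * q%:Z + a * q%:Z * r%:Z
        = a * q%:Z * r%:Z + b * r%:Z * p%:Z + c * p%:Z * q%:Z by ring.
exact: hk.
Qed.

Lemma abc_spec_swap (p q r : nat) (k a b c : int) :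
  abc_spec p q r k a b c -> abc_spec p r q k a c b.
Proof.
case=> ha hb hc hk; split=> //; rewrite mulnAC.
have -> : a * r%:Z * q%:Z + c * q%:Z * p%:Z + b * p%:Z * r%:Z
        = a * q%:Z * r%:Z + b * r%:Z * p%:Z + c * p%:Z * q%:Z by ring.
exact: hk.
Qed.

Lemma abc_spec_mod (p q r : nat) (k a b c : int) :
  abc_spec p q r k a b c -> (k == a * (q%:Z * r%:Z) %[mod p%:Z])%Z.
Proof.
case=> _ _ _; rewrite !eqz_mod_dvd !PoszM => hk.
have -> : k - a * (q%:Z * r%:Z)
        = (k - (a * q%:Z * r%:Z + b * r%:Z * p%:Z + c * p%:Z * q%:Z))
          + (b * r%:Z + c * q%:Z) * p%:Z by ring.
rewrite rpredD ?dvdz_mull //; apply: dvdz_trans hk.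
by rewrite -mulrA dvdz_mulr.
Qed.

Lemma Fval_swap (p q r : nat) (a b c : int -> int) (k : int) :
  Fval p r q a c b k = Fval p q r a b c k.
Proof. by rewrite /Fval mulnAC; ring. Qed.

Lemma Fval_sub (p q r : nat) (a b c : int -> int) (k s : int) :
  Fval p q r a b c k - Fval p q r a b c (k - s) =
    (a k - a (k - s))%:~R / p%:R + (b k - b (k - s))%:~R / q%:R
    + (c k - c (k - s))%:~R / r%:R - s%:~R / (p * q * r)%N%:R.
Proof. by rewrite /Fval !intrB; ring. Qed.

Section ShiftByQ.

Variables (p q r : nat) (a b c : int -> int) (r' p'r : nat).
Hypotheses (cpq : coprime p q) (cpr : coprime p r) (cqr : coprime q r).
Hypothesis habc : forall k : int, abc_spec p q r k (a k) (b k) (c k).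
Hypotheses (hr' : is_inv_mod r p r') (hp'r : is_inv_mod p r p'r).

Let r'_range : 0 <= r'%:Z < p%:Z.
Proof. by case: hr' => _ h _; rewrite ltz_nat h. Qed.
Let p'r_range : 0 <= p'r%:Z < r%:Z.
Proof. by case: hp'r => _ h _; rewrite ltz_nat h. Qed.

Lemma a_shift (k : int) :
  a k - a (k - q%:Z) = if a k < r'%:Z then r'%:Z - p%:Z else r'%:Z.
Proof.
case: (habc k) => ha _ _ _; case: (habc (k - q%:Z)) => ha' _ _ _.
apply: digit_step => //; apply: (@digit_shift _ (q%:Z * r%:Z) k q%:Z).
- by rewrite coprimezMr !coprimezE /= cpq cpr.
- exact: abc_spec_mod (habc k).
- exact: abc_spec_mod (habc (k - q%:Z)).
rewrite eqz_mod_dvd.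
have -> : q%:Z - r'%:Z * (q%:Z * r%:Z) = - q%:Z * (r%:Z * r'%:Z - 1) by ring.
by rewrite dvdz_mull // inv_mod_dvd.
Qed.

Lemma b_shift (k : int) : b k - b (k - q%:Z) = 0.
Proof.
case: (habc k) => _ hb _ _; case: (habc (k - q%:Z)) => _ hb' _ _.
have [b_ge0 b_ltq] := andP hb.
have zero_range : 0 <= (0%R : int) < q%:Z by rewrite lexx (le_lt_trans b_ge0 b_ltq).
rewrite (digit_step hb hb' zero_range); first by case: ifP => // hneg; lia.
apply: (@digit_shift _ (r%:Z * p%:Z) k q%:Z).
- by rewrite coprimezMr !coprimezE /= cqr coprime_sym cpq.
- exact/abc_spec_mod/abc_spec_rot/habc.
- exact/abc_spec_mod/abc_spec_rot/habc.
by rewrite eqz_mod_dvd mul0r subr0 dvdzz.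
Qed.

Lemma c_shift (k : int) :
  c k - c (k - q%:Z) = if c k < p'r%:Z then p'r%:Z - r%:Z else p'r%:Z.
Proof.
case: (habc k) => _ _ hc _; case: (habc (k - q%:Z)) => _ _ hc' _.
apply: digit_step => //; apply: (@digit_shift _ (p%:Z * q%:Z) k q%:Z).
- by rewrite coprimezMr !coprimezE /= !(coprime_sym r) cpr cqr.
- exact/abc_spec_mod/abc_spec_rot/abc_spec_rot/habc.
- exact/abc_spec_mod/abc_spec_rot/abc_spec_rot/habc.
rewrite eqz_mod_dvd.
have -> : q%:Z - p'r%:Z * (p%:Z * q%:Z) = - q%:Z * (p%:Z * p'r%:Z - 1) by ring.
by rewrite dvdz_mull // inv_mod_dvd.
Qed.

Lemma shift_by_q (k : int) :
  Fval p q r a b c k - Fval p q r a b c (k - q%:Z) =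
    (if (a k < r'%:Z) && (c k < p'r%:Z) then -1
     else if (r'%:Z <= a k) && (p'r%:Z <= c k) then 1 else 0).
Proof.
have [p0 r0] : p%:R != 0 :> rat /\ r%:R != 0 :> rat.
  by case: hr' hp'r => r'0 r'p _ [s0 sr _]; rewrite !pnatr_eq0 -!lt0n;
     split; [apply: leq_ltn_trans r'p | apply: leq_ltn_trans sr].
have q0 : q%:R != 0 :> rat.
  case: (habc 0) => _ /andP[hb0 hbq] _ _.
  by rewrite pnatr_eq0 -lt0n -ltz_nat (le_lt_trans hb0 hbq).
have hr'_val : r'%:R = (p%:R * r%:R + 1 - p'r%:R * p%:R) / r%:R :> rat.
  have hN := inv_mod_sum cpr hr' hp'r.
  have hNQ : r'%:R * r%:R + p'r%:R * p%:R = p%:R * r%:R + 1 :> rat.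
    by rewrite -!natrM -natrD hN natrD natrM.
  by rewrite -hNQ; field.
rewrite Fval_sub a_shift b_shift c_shift !leNgt.
by case: (a k < r'%:Z); case: (c k < p'r%:Z);
  rewrite /= ?intrB ?intr0 -!pmulrn !natrM hr'_val; field; rewrite p0 q0 r0.
Qed.

End ShiftByQ.

Theorem lemma2 (p q r : nat) (a b c : int -> int) (q' r' p'q p'r : nat)
  (hp : prime p) (hq : prime q) (hr : prime r)
  (hpq : (p < q)%N) (hpr : (p < r)%N) (hqr : q != r)
  (habc : forall k : int, abc_spec p q r k (a k) (b k) (c k))
  (hq' : is_inv_mod q p q') (hr' : is_inv_mod r p r')
  (hp'q : is_inv_mod p q p'q) (hp'r : is_inv_mod p r p'r) :
  forall k : int,
    Fval p q r a b c k - Fval p q r a b c (k - q%:Z) =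
      (if (a k < r'%:Z) && (c k < p'r%:Z) then -1
       else if (r'%:Z <= a k) && (p'r%:Z <= c k) then 1 else 0)
    /\
    Fval p q r a b c k - Fval p q r a b c (k - r%:Z) =
      (if (a k < q'%:Z) && (b k < p'q%:Z) then -1
       else if (q'%:Z <= a k) && (p'q%:Z <= b k) then 1 else 0).
Proof.
have coprime_primes (x y : nat) : prime x -> prime y -> x != y -> coprime x y.
  by move=> px py xy; rewrite prime_coprime // dvdn_prime2.
have cpq : coprime p q by rewrite coprime_primes // ltn_eqF.
have cpr : coprime p r by rewrite coprime_primes // ltn_eqF.
have cqr : coprime q r by rewrite coprime_primes.
move=> k; split; first exact: shift_by_q.
rewrite -!(Fval_swap p q r).
apply: shift_by_q => //; first by rewrite coprime_sym.
by move=> k'; apply: abc_spec_swap.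
Qed.
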